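(* Let $X$ be a Banach lattice and $P\colon X\to X$ a strictly positive projection. If the only closed ideals $J$ of $X$ with $P(J)\subseteq J$ are $\{0\}$ and $X$, then $P$ has rank $1$.
   Context: A projection $P$ ($P^2=P$, linear) on a vector lattice is strictly positive if $x>0$ implies $Px>0$. *)

From HB Require Import structures.
From mathcomp Require Import all_boot all_order all_algebra.
From mathcomp Require Import all_classical all_reals all_analysis.
Set Implicit Arguments. Unset Strict Implicit. Unset Printing Implicit Defensive.
Import Order.TTheory GRing.Theory Num.Theory.
Import numFieldNormedType.Exports.
Local Open Scope classical_set_scope.
Local Open Scope ring_scope.

Section BanachLattice.
Variables (R : realType) (V : completeNormedModType R).

Definition vector_lattice (le : V -> V -> Prop) (join : V -> V -> V) : Prop :=
  [/\ (forall x, le x x) /\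
      (forall x y, le x y -> le y x -> x = y),
      (forall x y z, le x y -> le y z -> le x z),
      (forall x y z, le x y -> le (x + z) (y + z)),
      (forall (a : R) x y, 0 <= a -> le x y -> le (a *: x) (a *: y)) &
      (forall x y, [/\ le x (join x y), le y (join x y) &
                    forall z, le x z -> le y z -> le (join x y) z])].

Definition labs (join : V -> V -> V) (x : V) : V := join x (- x).

Definition banach_lattice (le : V -> V -> Prop) (join : V -> V -> V) : Prop :=
  vector_lattice le join /\
  (forall x y, le (labs join x) (labs join y) -> `|x| <= `|y|).

Definition lpos (le : V -> V -> Prop) (x : V) : Prop := le 0 x /\ x <> 0.

Definition strictly_positive (le : V -> V -> Prop) (P : V -> V) : Prop :=
  forall x, lpos le x -> lpos le (P x).

Definition projection (P : {linear V -> V}) : Prop := forall x, P (P x) = P x.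

Definition lattice_ideal (le : V -> V -> Prop) (join : V -> V -> V)
  (J : set V) : Prop :=
  [/\ J 0,
      (forall x y, J x -> J y -> J (x + y)),
      (forall (a : R) x, J x -> J (a *: x)) &
      (forall x y, J x -> le (labs join y) (labs join x) -> J y)].

Definition rank_one (P : V -> V) : Prop :=
  exists u : V, u <> 0 /\ range P = [set a *: u | a in [set: R]].

End BanachLattice.

(* A strictly positive projection P is positive, hence bounded: a positive operator
   unbounded on the cone would be unbounded on the terms of a norm-summable positive
   series, all of which lie below its sum. P also fixes the positive and negative parts
   of each fixed vector y, since y^+ <= P y^+ and P (P y^+ - y^+) = 0. The set of x such
   that P|x| is disjoint from y^- is then a closed P-invariant ideal containing y^+ and,
   unless y^- = 0, not containing y^-; by irreducibility every fixed vector is positive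
   or negative. For u = P|x| > 0 and v in the range of P, every v - t u is fixed, and
   t = sup {t | t u <= v} gives v = t u. *)

From HB Require Import structures.
From mathcomp Require Import all_boot all_order all_algebra.
From mathcomp Require Import all_classical all_reals all_analysis.
From mathcomp Require Import lra.
Import Order.TTheory GRing.Theory Num.Theory.
Import numFieldNormedType.Exports.
Local Open Scope classical_set_scope.
Local Open Scope ring_scope.
Set Implicit Arguments. Unset Strict Implicit.

Lemma lipschitz_continuous (R : numFieldType) (U W : normedModType R)
    (k : R) (f : U -> W) :
  0 < k -> (forall x y, `|f x - f y| <= k * `|x - y|) -> continuous f.
Proof.
move=> k0 fk x; apply/cvgrPdist_lt => e e0; near=> y.
rewrite (le_lt_trans (fk x y)) // -ltr_pdivlMl //.
by near: y; apply: cvgr_dist_lt => //; rewrite mulrC divr_gt0.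
Unshelve. all: by end_near. Qed.

Section VectorLattice.
Variables (R : realType) (V : completeNormedModType R).
Variables (le : V -> V -> Prop) (join : V -> V -> V).
Hypothesis lattice : vector_lattice le join.

Local Notation labs := (labs join).

Lemma lle_refl x : le x x. Proof. by case: lattice => -[refl _]. Qed.
Lemma lle_anti x y : le x y -> le y x -> x = y.
Proof. by case: lattice => -[_ anti] *; apply: anti. Qed.
Lemma lle_trans y x z : le x y -> le y z -> le x z.
Proof. by case: lattice => _ trans *; apply: trans; eassumption. Qed.
Lemma lleD2r z x y : le x y -> le (x + z) (y + z).
Proof. by case: lattice => _ _ add *; apply: add. Qed.
Lemma lleZ2l (a : R) x y : 0 <= a -> le x y -> le (a *: x) (a *: y).
Proof. by case: lattice => _ _ _ scale *; apply: scale. Qed.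
Lemma ljoin_ubl x y : le x (join x y).
Proof. by case: lattice => _ _ _ _ /(_ x y) []. Qed.
Lemma ljoin_ubr x y : le y (join x y).
Proof. by case: lattice => _ _ _ _ /(_ x y) []. Qed.
Lemma ljoin_lub x y z : le x z -> le y z -> le (join x y) z.
Proof. by case: lattice => _ _ _ _ /(_ x y) [_ _ lub]; apply: lub. Qed.

Lemma lleD2l z x y : le x y -> le (z + x) (z + y).
Proof. by rewrite ![z + _]addrC; apply: lleD2r. Qed.
Lemma lleD2rK z x y : le (x + z) (y + z) -> le x y.
Proof. by move=> /(lleD2r (- z)); rewrite !addrK. Qed.
Lemma lsubr_ge0 x y : le 0 (y - x) <-> le x y.
Proof.
split=> [/(lleD2r x)|/(lleD2r (- x))]; first by rewrite add0r subrK.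
by rewrite subrr.
Qed.
Lemma lleBlDr x y z : le (x - y) z <-> le x (z + y).
Proof. by split=> [/(lleD2r y)|/(lleD2r (- y))]; rewrite ?subrK ?addrK. Qed.
Lemma lleN2 x y : le x y -> le (- y) (- x).
Proof. by move=> /(lleD2r (- x - y)); rewrite addrA subrr add0r addrC addrNK. Qed.
Lemma lleD a b c d : le a b -> le c d -> le (a + c) (b + d).
Proof. by move=> /(lleD2r c) ? /(lleD2l b); apply: lle_trans. Qed.
Lemma laddr_ge0 a b : le 0 a -> le 0 b -> le 0 (a + b).
Proof. by rewrite -{3}[0]addr0; apply: lleD. Qed.
Lemma lscaler_ge0 (a : R) x : 0 <= a -> le 0 x -> le 0 (a *: x).
Proof. by move=> a0 /(lleZ2l a0); rewrite scaler0. Qed.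
Lemma lle_addr a b : le 0 b -> le a (a + b).
Proof. by rewrite -{1}[a]addr0; apply: lleD2l. Qed.
Lemma lleZ2r (s t : R) x : le 0 x -> s <= t -> le (s *: x) (t *: x).
Proof.
by move=> x0 st; apply/lsubr_ge0; rewrite -scalerBl; apply: lscaler_ge0; rewrite ?subr_ge0.
Qed.

Lemma ljoinC x y : join x y = join y x.
Proof. by apply: lle_anti; apply: ljoin_lub; (apply: ljoin_ubl || apply: ljoin_ubr). Qed.
Lemma ljoin_l x y : le y x -> join x y = x.
Proof. by move=> yx; apply: lle_anti (ljoin_ubl _ _); apply: ljoin_lub (lle_refl _) yx. Qed.
Lemma ljoin_lel z x y : le x y -> le (join x z) (join y z).
Proof.
by move=> xy; apply: ljoin_lub (ljoin_ubr _ _); apply: lle_trans xy (ljoin_ubl _ _).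
Qed.
Lemma ljoinDr z x y : join (x + z) (y + z) = join x y + z.
Proof.
apply: lle_anti.
  by apply: ljoin_lub; apply: lleD2r; [apply: ljoin_ubl|apply: ljoin_ubr].
apply: (@lleD2rK (- z)); rewrite addrK.
by apply: ljoin_lub; apply: (@lleD2rK z); rewrite subrK; [apply: ljoin_ubl|apply: ljoin_ubr].
Qed.

Lemma lle_labs x : le x (labs x). Proof. exact: ljoin_ubl. Qed.
Lemma lleN_labs x : le (- x) (labs x). Proof. exact: ljoin_ubr. Qed.
Lemma labs_le x z : le x z -> le (- x) z -> le (labs x) z. Proof. exact: ljoin_lub. Qed.
Lemma labsN x : labs (- x) = labs x. Proof. by rewrite /labs opprK ljoinC. Qed.
Lemma labs_ge0 x : le 0 (labs x).
Proof.
have /lsubr_ge0 := lle_labs x; have /lsubr_ge0 := lleN_labs x; rewrite opprK => h1 h2.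
have := lscaler_ge0 (a := 2^-1) _ (laddr_ge0 h1 h2).
rewrite addrACA subrr addr0 -mulr2n -[labs x *+ 2]scaler_nat scalerA mulVf ?scale1r //.
by apply; rewrite invr_ge0.
Qed.
Lemma ger0_labs x : le 0 x -> labs x = x.
Proof.
by move=> x0; apply: ljoin_l; apply: lle_trans (x0); rewrite -oppr0; apply: lleN2.
Qed.
Lemma labs0 : labs 0 = 0. Proof. exact/ger0_labs/lle_refl. Qed.
Lemma labsD_le x y : le (labs (x + y)) (labs x + labs y).
Proof.
by apply: labs_le; rewrite ?opprD; apply: lleD; first [exact: lle_labs | exact: lleN_labs].
Qed.
Lemma labsZ_le (r : R) x : le (labs (r *: x)) (`|r| *: labs x).
Proof.
wlog r0 : r x / 0 <= r.
  move=> wlog_r; have [|r0] := leP 0 r; first exact: wlog_r.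
  rewrite -[r *: x]opprK -scaleNr -scalerN -normrN -(labsN x).
  by apply: wlog_r; rewrite oppr_ge0 ltW.
rewrite ger0_norm //; apply: labs_le; rewrite -?scalerN; apply: lleZ2l => //.
  exact: lle_labs.
exact: lleN_labs.
Qed.

Definition lpart x := join x 0.
Definition npart x := join (- x) 0.

Lemma lpart_ge0 x : le 0 (lpart x). Proof. exact: ljoin_ubr. Qed.
Lemma npart_ge0 x : le 0 (npart x). Proof. exact: ljoin_ubr. Qed.
Lemma lpartBnpart x : lpart x - npart x = x.
Proof.
apply/eqP; rewrite subr_eq addrC -subr_eq; apply/eqP.
by rewrite /lpart -ljoinDr subrr add0r ljoinC.
Qed.
Lemma npart_eq0 x : npart x = 0 <-> le 0 x.
Proof.
split=> [nx0|x0]; first by rewrite -(lpartBnpart x) nx0 subr0; apply: lpart_ge0.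
by rewrite /npart ljoinC; apply: ljoin_l; rewrite -oppr0; apply: lleN2.
Qed.

(* Since q - (q - a)^+ is the meet of q and a, for positive q and a this says
   that q and a are disjoint. *)
Definition ldisjoint q a := le q (lpart (q - a)).

Lemma ldisjoint_le q a b : le a b -> ldisjoint q b -> ldisjoint q a.
Proof. by move=> /lleN2 /(lleD2l q) /(ljoin_lel 0) ab /lle_trans; apply. Qed.
Lemma ldisjoint0 q : ldisjoint q 0.
Proof. by rewrite /ldisjoint subr0; apply: ljoin_ubl. Qed.
Lemma ldisjointD q a b :
  le 0 b -> ldisjoint q a -> ldisjoint q b -> ldisjoint q (a + b).
Proof.
move=> b0 qa qb; apply: lle_trans qb _; apply: ljoin_lub (ljoin_ubr _ _).
apply: lle_trans (lleD2r (- b) qa) _.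
rewrite /lpart -ljoinDr add0r opprD addrA ljoinC [X in le _ X]ljoinC.
by apply: ljoin_lel; rewrite -oppr0; apply: lleN2.
Qed.
Lemma ldisjointMn q a n : le 0 a -> ldisjoint q a -> ldisjoint q (a *+ n).
Proof.
move=> a0 qa; elim: n => [|n IHn]; first exact: ldisjoint0.
by rewrite mulrSr; apply: ldisjointD.
Qed.

Section LatticeNorm.
Hypothesis lnorm_labs : forall x y, le (labs x) (labs y) -> `|x| <= `|y|.

Lemma norm_labs x : `|labs x| = `|x|.
Proof.
have labsK : labs (labs x) = labs x by apply/ger0_labs/labs_ge0.
apply/eqP; rewrite eq_le; apply/andP.
by split; apply: lnorm_labs; rewrite labsK; apply: lle_refl.
Qed.
Lemma lnorm_le a b : le 0 a -> le a b -> `|a| <= `|b|.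
Proof.
move=> a0 ab; apply: lnorm_labs; rewrite !ger0_labs //; exact: lle_trans ab.
Qed.
Lemma norm_le_labs a b : le (labs a) b -> `|a| <= `|b|.
Proof. by move=> ab; rewrite -norm_labs; apply: lnorm_le (labs_ge0 a) ab. Qed.
Lemma labs_eq0 x : labs x = 0 -> x = 0.
Proof.
move=> x0; apply/normr0_eq0/eqP; rewrite eq_le normr_ge0 andbT -(normr0 V).
by apply: lnorm_labs; rewrite x0 labs0; apply: lle_refl.
Qed.

Lemma lle_add_labsB x y : le x (y + labs (x - y)).
Proof. by rewrite -{1}(subrK y x) addrC; apply: lleD2l; apply: lle_labs. Qed.
Lemma ljoinB_le a b c d : le (join a b - join c d) (labs (a - c) + labs (b - d)).
Proof.
apply: (@lleD2rK (join c d)); rewrite subrK addrC; apply: ljoin_lub.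
  apply: lle_trans (lle_add_labsB a c) _; rewrite addrA.
  apply: lle_trans (lle_addr _ (labs_ge0 (b - d))).
  by apply: lleD2r; apply: ljoin_ubl.
apply: lle_trans (lle_add_labsB b d) _; rewrite [labs (a - c) + _]addrC addrA.
apply: lle_trans (lle_addr _ (labs_ge0 (a - c))).
by apply: lleD2r; apply: ljoin_ubr.
Qed.
Lemma labs_ljoinB_le a b c d :
  le (labs (join a b - join c d)) (labs (a - c) + labs (b - d)).
Proof.
apply: labs_le; first exact: ljoinB_le.
by rewrite opprB -(labsN (a - c)) -(labsN (b - d)) !opprB; apply: ljoinB_le.
Qed.
Lemma norm_ljoinB_le a b c d : `|join a b - join c d| <= `|a - c| + `|b - d|.
Proof.
apply: le_trans (norm_le_labs (labs_ljoinB_le _ _ _ _)) _.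
by apply: le_trans (ler_normD _ _) _; rewrite !norm_labs.
Qed.

Lemma closed_lcone : closed [set x | le 0 x].
Proof.
have -> : [set x | le 0 x] = npart @^-1` [set 0].
  by apply/seteqP; split=> x /npart_eq0.
apply: preimage_closed => [x _|].
  apply: (@lipschitz_continuous _ _ _ 1) => // {}x y; rewrite mul1r.
  apply: le_trans (norm_ljoinB_le _ _ _ _) _.
  by rewrite subrr normr0 addr0 -opprD normrN.
exact/accessible_closed_set1/hausdorff_accessible/norm_hausdorff.
Qed.

Lemma lseries_ge0 (z : nat -> V) n : (forall k, le 0 (z k)) -> le 0 (series z n).
Proof.
move=> z0; elim: n => [|n IHn]; last by rewrite seriesSr; apply: laddr_ge0.
by rewrite /series /= big_geq //; apply: lle_refl.
Qed.
Lemma lle_series (z : nat -> V) n m :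
  (forall k, le 0 (z k)) -> (n < m)%N -> le (z n) (series z m).
Proof.
move=> z0; elim: m => // m IHm; rewrite ltnS leq_eqVlt seriesSr => /orP[/eqP->|/IHm nm].
  by rewrite addrC; apply/lle_addr/lseries_ge0.
exact: lle_trans nm (lle_addr _ (z0 m)).
Qed.
Lemma lle_series_lim (z : nat -> V) n :
  (forall k, le 0 (z k)) -> cvgn (series z) -> le (z n) (limn (series z)).
Proof.
move=> z0 cz; apply/lsubr_ge0.
apply: (closed_cvg _ closed_lcone _ _ (cvgB cz (cvg_cst (z n)))).
by exists n.+1 => // m nm; apply/lsubr_ge0/lle_series.
Qed.

Lemma lle_scale_norm (t : R) u v : le 0 u -> le (t *: u) v -> t * `|u| <= `|v|.
Proof.
move=> u0 tuv; have [t_le0|t_gt0] := leP t 0.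
  exact: le_trans (mulr_le0_ge0 t_le0 (normr_ge0 u)) (normr_ge0 v).
by have := lnorm_le (lscaler_ge0 (ltW t_gt0) u0) tuv; rewrite normrZ gtr0_norm.
Qed.

Lemma labs_le_scale_eq0 u x : (forall e : R, 0 < e -> le (labs x) (e *: u)) -> x = 0.
Proof.
move=> small; apply/normr0_eq0/eqP; rewrite eq_le normr_ge0 andbT.
apply/ler_addgt0Pr => e e0; rewrite add0r.
have u1 : 0 < `|u| + 1 := ltr_wpDl (normr_ge0 u) ltr01.
apply: le_trans (norm_le_labs (small _ (divr_gt0 e0 u1))) _.
rewrite normrZ gtr0_norm ?divr_gt0 // mulrAC ler_pdivrMr //.
by rewrite ler_wpM2l ?(ltW e0) // lerDl.
Qed.

Lemma comparable_line_scale u v : le 0 u -> u <> 0 ->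
  (forall t : R, le (v - t *: u) 0 \/ le 0 (v - t *: u)) -> exists t, v = t *: u.
Proof.
move=> u0 u_neq0 cmp; have u_gt0 : 0 < `|u| by rewrite normr_gt0; apply/eqP.
pose A := [set t : R | le (t *: u) v].
have ubA : ubound A (`|v| / `|u|).
  by move=> t /(lle_scale_norm u0); rewrite ler_pdivlMr.
have [t1 At1] : A !=set0.
  exists (- (`|v| / `|u|) - 1); have [/lleBlDr|/lsubr_ge0 //] := cmp (- (`|v| / `|u|) - 1).
  rewrite add0r => /lleN2; rewrite -scaleNr => /(lle_scale_norm u0).
  by rewrite normrN opprB opprK mulrDl mulfVK ?normr_eq0; [lra|apply/eqP].
have supA : has_sup A by split; [exists t1 | exists (`|v| / `|u|)].
have below e : 0 < e -> le ((sup A - e) *: u) v.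
  move=> e0; have [t At lt_t] := sup_adherent e0 supA.
  exact: lle_trans (lleZ2r u0 (ltW lt_t)) At.
have above e : 0 < e -> le v ((sup A + e) *: u).
  move=> e0; have [/lleBlDr|/lsubr_ge0 /(sup_upper_bound supA)] := cmp (sup A + e).
    by rewrite add0r.
  by rewrite gerDl leNgt e0.
exists (sup A); apply/subr0_eq/(labs_le_scale_eq0 (u := u)) => e e0.
apply: labs_le; first by apply/lleBlDr; rewrite -scalerDl addrC; apply: above.
rewrite opprB; apply/lleBlDr; rewrite addrC.
by apply/lleBlDr; rewrite -scalerBl; apply: below.
Qed.

Section PositiveOperator.
Variable T : {linear V -> V}.
Hypothesis T_ge0 : forall x, le 0 x -> le 0 (T x).

Lemma lle_T x y : le x y -> le (T x) (T y).
Proof. by move=> /lsubr_ge0/T_ge0; rewrite linearB => /lsubr_ge0. Qed.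
Lemma labs_T_le x : le (labs (T x)) (T (labs x)).
Proof.
by apply: labs_le; rewrite -?linearN; apply: lle_T; [apply: lle_labs|apply: lleN_labs].
Qed.

Lemma T_norm_gt_rescale (C r : R) x : 0 < r -> le 0 x -> C * `|x| < `|T x| ->
  exists z, [/\ le 0 z, `|z| = r & C * r < `|T z|].
Proof.
move=> r0 x0 Cx; have x_neq0 : x != 0.
  by apply: contraTneq Cx => ->; rewrite linear0 !normr0 mulr0 ltxx.
have k0 : 0 < r / `|x| by rewrite divr_gt0 ?normr_gt0.
exists ((r / `|x|) *: x); split; first exact: lscaler_ge0 (ltW k0) x0.
  by rewrite normrZ gtr0_norm // divfK ?normr_eq0.
have -> : C * r = r / `|x| * (C * `|x|) by rewrite mulrCA divfK ?normr_eq0.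
by rewrite linearZ normrZ gtr0_norm // ltr_pM2l.
Qed.

Lemma T_bounded_on_cone : exists2 C, 0 < C & forall x, le 0 x -> `|T x| <= C * `|x|.
Proof.
apply: contrapT => unbounded.
have big n : exists z, [/\ le 0 z, `|z| = 2^-1 ^+ n & n%:R < `|T z|].
  have r0 : 0 < 2^-1 ^+ n :> R by rewrite exprn_gt0 // invr_gt0.
  have C0 : 0 < n.+1%:R / 2^-1 ^+ n :> R by rewrite divr_gt0.
  have /existsNP [x /not_implyP [x0 /negP]] :
      ~ forall x, le 0 x -> `|T x| <= n.+1%:R / 2^-1 ^+ n * `|x|.
    by move=> bounded; apply: unbounded; exists (n.+1%:R / 2^-1 ^+ n).
  rewrite -ltNge => /(T_norm_gt_rescale r0 x0) [z [z0 zr]].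
  rewrite divfK ?gt_eqF // => Tz.
  by exists z; split => //; apply: lt_trans Tz; rewrite ltr_nat.
have [z /all_and3 [z0 z_norm Tz_big]] := choice big.
have cvg_z : cvgn (series z).
  apply: normed_cvg; apply: (@series_le_cvg _ _ (geometric 1 2^-1)) => [n|n|n|].
  - exact: normr_ge0.
  - by rewrite /geometric /= mul1r exprn_ge0.
  - by rewrite /= z_norm /geometric /= mul1r.
  - by apply: is_cvg_geometric_series; rewrite ger0_norm // invf_lt1 // ltr1n.
set s := limn (series z); set n := (Num.truncn `|T s|).+1.
have Tz_le : `|T (z n)| <= `|T s|.
  exact: lnorm_le (T_ge0 (z0 n)) (lle_T (lle_series_lim n z0 cvg_z)).
have := lt_le_trans (Tz_big n) Tz_le.
by rewrite ltNge ltW // truncnS_gt.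
Qed.

Lemma T_bounded : exists2 C, 0 < C & forall x, `|T x| <= C * `|x|.
Proof.
have [C C0 TC] := T_bounded_on_cone; exists C => // x.
by rewrite -(norm_labs x); apply: le_trans (norm_le_labs (labs_T_le x)) (TC _ (labs_ge0 x)).
Qed.

Definition ldisjoint_ideal q := [set x | ldisjoint q (T (labs x))].

Lemma lattice_ideal_disjoint q : lattice_ideal le join (ldisjoint_ideal q).
Proof.
have Tlabs_ge0 x : le 0 (T (labs x)) by apply/T_ge0/labs_ge0.
split=> [|x y qx qy|r x qx|x y qx yx]; rewrite /ldisjoint_ideal /=.
- by rewrite labs0 linear0; apply: ldisjoint0.
- by apply: ldisjoint_le (lle_T (labsD_le x y)) _; rewrite linearD; apply: ldisjointD.
- apply: ldisjoint_le (lle_T (labsZ_le r x)) _; rewrite linearZ.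
  apply: (@ldisjoint_le _ _ (T (labs x) *+ (Num.truncn `|r|).+1)).
    rewrite -scaler_nat; apply: lleZ2r => //; exact/ltW/truncnS_gt.
  exact: ldisjointMn.
- exact: ldisjoint_le (lle_T yx) qx.
Qed.

Lemma closed_ldisjoint_ideal q : closed (ldisjoint_ideal q).
Proof.
have -> : ldisjoint_ideal q = (fun x => lpart (q - T (labs x)) - q) @^-1` [set x | le 0 x].
  by apply/seteqP; split=> x /lsubr_ge0.
apply: preimage_closed closed_lcone => x _.
have [C C0 TC] := T_bounded.
apply: (@lipschitz_continuous _ _ _ (C * 2)) => [|{}x y]; first exact: mulr_gt0.
rewrite opprB addrA subrK; apply: le_trans (norm_ljoinB_le _ _ _ _) _.
rewrite subrr normr0 addr0 opprB addrC addrA subrK -linearB (le_trans (TC _)) //.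
rewrite -mulrA ler_wpM2l ?(ltW C0) // mulr2n mulrDl mul1r.
apply: le_trans (norm_ljoinB_le _ _ _ _) _.
by rewrite distrC opprK [- y + x]addrC.
Qed.

Lemma ldisjoint_ideal_invariant q :
  projection T -> T @` ldisjoint_ideal q `<=` ldisjoint_ideal q.
Proof.
move=> T_proj _ [x qx <-]; rewrite /ldisjoint_ideal /=.
by apply: ldisjoint_le (lle_T (labs_T_le x)) _; rewrite T_proj.
Qed.

End PositiveOperator.

Section StrictlyPositiveProjection.
Variable P : {linear V -> V}.
Hypotheses (P_proj : projection P) (P_spos : strictly_positive le P).

Lemma strictly_positive_ge0 x : le 0 x -> le 0 (P x).
Proof.
move=> x0; have [->|x_neq0] := pselect (x = 0); first by rewrite linear0; apply: lle_refl.
by have [] := P_spos (conj x0 x_neq0).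
Qed.

Lemma fixed_of_le z : le z (P z) -> P z = z.
Proof.
move=> /lsubr_ge0 z_le; apply/subr0_eq; apply: contrapT => Pz_neq.
by have [_] := P_spos (conj z_le Pz_neq); rewrite linearB P_proj subrr.
Qed.

Lemma lpart_fixed y : P y = y -> P (lpart y) = lpart y.
Proof.
move=> Py; apply: fixed_of_le; apply: ljoin_lub.
  by rewrite -{1}Py; apply/(lle_T strictly_positive_ge0)/ljoin_ubl.
exact/strictly_positive_ge0/lpart_ge0.
Qed.
Lemma npart_fixed y : P y = y -> P (npart y) = npart y.
Proof. by move=> Py; apply: (@lpart_fixed (- y)); rewrite linearN Py. Qed.

Hypothesis P_irreducible : forall J, lattice_ideal le join J -> closed J ->
  P @` J `<=` J -> J = [set 0] \/ J = [set: V].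

Lemma fixed_comparable y : P y = y -> le y 0 \/ le 0 y.
Proof.
move=> Py; have [/npart_eq0|ny_neq0] := pselect (npart y = 0); [by right|left].
have P_ge0 := strictly_positive_ge0; set J := ldisjoint_ideal P (npart y).
have [J0|JT] := P_irreducible (lattice_ideal_disjoint P_ge0 (npart y))
  (closed_ldisjoint_ideal P_ge0 (q := npart y))
  (ldisjoint_ideal_invariant P_ge0 (q := npart y) P_proj).
- have : J (lpart y).
    rewrite /J /ldisjoint_ideal /= ger0_labs ?lpart_fixed //; last exact: lpart_ge0.
    by rewrite /ldisjoint -opprB lpartBnpart; apply: lle_refl.
  by rewrite /J J0 => <-; apply: ljoin_ubl.
- case: ny_neq0; apply: lle_anti (npart_ge0 y).
  have : J (npart y) by rewrite /J JT.
  rewrite /J /ldisjoint_ideal /= ger0_labs ?npart_fixed //; last exact: npart_ge0.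
  rewrite /ldisjoint subrr.
  by rewrite /lpart ljoin_l //; apply: lle_refl.
Qed.

End StrictlyPositiveProjection.
End LatticeNorm.
End VectorLattice.

Theorem lemma2p4 (R : realType) (V : completeNormedModType R)
  (le : V -> V -> Prop) (join : V -> V -> V) (P : {linear V -> V}) :
  banach_lattice le join ->
  (exists x : V, x <> 0) ->
  projection P ->
  strictly_positive le P ->
  (forall J : set V, lattice_ideal le join J -> closed J -> P @` J `<=` J ->
     J = [set 0] \/ J = [set: V]) ->
  rank_one P.
Proof.
move=> [lattice lnorm] [x x_neq0] P_proj P_spos P_irr.
set u := P (labs join x).
have [u_ge0 u_neq0] : lpos le u.
  by apply: P_spos; split; [exact: labs_ge0 | move/(labs_eq0 lattice lnorm)].
exists u; split => //; apply/seteqP; split=> _ [y _ <-]; last first.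
  by exists (y *: u); rewrite // linearZ /u P_proj.
have Py_fixed t : P (P y - t *: u) = P y - t *: u by rewrite linearB linearZ !P_proj.
have [t ->] := comparable_line_scale lattice lnorm u_ge0 u_neq0
  (fun t => fixed_comparable lattice lnorm P_proj P_spos P_irr (Py_fixed t)).
by exists t.
Qed.
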